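(* Let $s$, $k$ and $i\le k$ be job indices with $r_i\ge r_s$. Let $C^{\mathrm{edf}}$ denote the minimum completion time $C_i(S)$ over all $(s,k)$-schedules $S$ having the earliest-deadline property that schedule job $i$. Then $$C^{\mathrm{edf}}=C_i(G_{s,k})=\max_{\substack{l\le i\\ r_s\le r_l\le r_i}}\ \min\{\,b\in\mathbb{Z} : b>r_i \text{ and } b\ge r_l+\mathrm{load}_i(r_l,b)\,\}.$$ In particular this value does not depend on $k$.
   Context: Time is discrete (slots $[t,t+1)$, $t\in\mathbb{Z}$). There are $n$ jobs, job $j$ with integer processing time $p_j\ge1$, release time $r_j$, deadline $d_j$; jobs are indexed so that $d_1<d_2<\dots<d_n$, release times are pairwise distinct, and the instance is feasible (some schedule executes every job $j$ for $p_j$ slots within $[r_j,d_j)$). A (partial) schedule assigns to each slot at most one job so that every job it schedules receives exactly $p_j$ slots within $[r_j,d_j)$. $C_j(S)$ is the end of the last slot of job $j$ in $S$ and $C_{\max}(S)=\max_j C_j(S)$. $S$ has the earliest-deadline property if whenever it is busy at slot $t$ it executes, among the jobs it schedules that are released by $t$ and not yet completed, the one with the smallest deadline. For $s\in\{1,\dots,n\}$, $k\in\{0,\dots,n\}$, an $(s,k)$-schedule is a schedule $S$ with $C_{\max}(S)\le d_k$ that schedules exactly the jobs $j\le k$ with $r_s\le r_j<C_{\max}(S)$; the empty schedule is an $(s,k)$-schedule with $C_{\max}=r_s$. The greedy schedule $G_{s,k}$ schedules the jobs $j\le k$ with $r_j\ge r_s$ by, at each slot $t=r_s,r_s+1,\dots$,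 executing the released, not yet completed such job of smallest deadline (idling if none). For a job $i$ and times $a<b$, $\mathrm{load}_i(a,b)=\sum_{j\le i,\ a\le r_j<b}p_j$. *)

From mathcomp Require Import all_boot all_order all_algebra.
Set Implicit Arguments. Unset Strict Implicit. Unset Printing Implicit Defensive.
Import Order.TTheory GRing.Theory Num.Theory.
Local Open Scope ring_scope.

(* An instance: n jobs, job j (1 <= j <= n) has processing time p j,
   release time r j and deadline d j. Values outside 1..n are irrelevant. *)
Record instance := Instance {
  njobs : nat;
  ptime : nat -> nat;
  rtime : nat -> int;
  dtime : nat -> int }.

Definition is_job (I : instance) (j : nat) : bool := (1 <= j <= njobs I)%N.

(* A (partial) schedule: slot [t,t+1) executes job S t, or idles (None). *)
Definition sched := int -> option nat.

Definition count_slots (S : sched) (j : nat) (a b : int) : nat :=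
  count (fun u : nat => S (a + u%:Z) == Some j)
        (iota 0 (if a <= b then absz (b - a) else 0%N)).

Definition scheduled (S : sched) (j : nat) : Prop := exists t, S t = Some j.

Definition is_schedule (I : instance) (S : sched) : Prop :=
  (forall t j, S t = Some j -> is_job I j /\ rtime I j <= t < dtime I j) /\
  (forall j, scheduled S j -> count_slots S j (rtime I j) (dtime I j) = ptime I j).

Definition valid_instance (I : instance) : Prop :=
  (forall j, is_job I j -> (1 <= ptime I j)%N) /\
  (forall j j', is_job I j -> is_job I j' -> (j < j')%N -> dtime I j < dtime I j') /\
  (forall j j', is_job I j -> is_job I j' -> rtime I j = rtime I j' -> j = j') /\
  (exists S, is_schedule I S /\ forall j, is_job I j -> scheduled S j).

(* C_j(S) = c : the end of the last slot of job j in S is c *)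
Definition is_completion (S : sched) (j : nat) (c : int) : Prop :=
  S (c - 1) = Some j /\ forall t, S t = Some j -> t < c.

(* C_max(S) = c, with the convention C_max(empty) = r_s *)
Definition is_cmax (I : instance) (s : nat) (S : sched) (c : int) : Prop :=
  ((forall t, S t = None) /\ c = rtime I s) \/
  (exists j, S (c - 1) = Some j /\ forall t j', S t = Some j' -> t < c).

Definition sk_schedule (I : instance) (s k : nat) (S : sched) : Prop :=
  is_schedule I S /\
  exists c, is_cmax I s S c /\ c <= dtime I k /\
    forall j, scheduled S j <->
      ((1 <= j <= k)%N /\ rtime I s <= rtime I j /\ rtime I j < c).

Definition edf (I : instance) (S : sched) : Prop :=
  forall t j l, S t = Some j -> scheduled S l -> rtime I l <= t ->
    (forall c, is_completion S l c -> t < c) -> dtime I j <= dtime I l.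

(* The greedy schedule G_{s,k}.  At step u (slot r_s + u), with remaining
   processing times rem, execute the released, uncompleted job j <= k with
   r_j >= r_s of smallest deadline. *)
Definition g_eligible (I : instance) (s k : nat) (rem : nat -> nat) (u : nat)
  (j : nat) : bool :=
  [&& (1 <= j <= k)%N, rtime I s <= rtime I j, rtime I j <= rtime I s + u%:Z
    & (0 < rem j)%N].

Definition g_pick (I : instance) (s k : nat) (rem : nat -> nat) (u : nat)
  : option nat :=
  foldl (fun best j =>
           if g_eligible I s k rem u j then
             match best with
             | None => Some j
             | Some b => if dtime I j < dtime I b then Some j else best
             end
           else best) None (iota 1 k).

Fixpoint g_rem (I : instance) (s k : nat) (u : nat) : nat -> nat :=
  match u with
  | 0%N => ptime I
  | u'.+1 => let R := g_rem I s k u' in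
             fun j => if g_pick I s k R u' == Some j then (R j).-1 else R j
  end.

Definition greedy (I : instance) (s k : nat) : sched :=
  fun t => if rtime I s <= t then
             let u := absz (t - rtime I s) in g_pick I s k (g_rem I s k u) u
           else None.

Definition load (I : instance) (i : nat) (a b : int) : int :=
  Posz (\sum_(1 <= j < i.+1 | ((a <= rtime I j)%R && (rtime I j < b)%R)) ptime I j)%N.

Definition bound_ok (I : instance) (i l : nat) (b : int) : Prop :=
  rtime I i < b /\ rtime I l + load I i (rtime I l) b <= b.

Definition is_min_bound (I : instance) (i l : nat) (b : int) : Prop :=
  bound_ok I i l b /\ forall b', bound_ok I i l b' -> b <= b'.

Definition is_formula_value (I : instance) (s i : nat) (v : int) : Prop :=
  (exists l, [/\ (1 <= l <= i)%N, rtime I s <= rtime I l, rtime I l <= rtime I i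
                 & is_min_bound I i l v]) /\
  (forall l b, (1 <= l <= i)%N -> rtime I s <= rtime I l -> rtime I l <= rtime I i ->
     is_min_bound I i l b -> b <= v).

From mathcomp Require Import all_boot all_order all_algebra zify.
Set Implicit Arguments. Unset Strict Implicit. Unset Printing Implicit Defensive.
Import Order.TTheory GRing.Theory Num.Theory.
Local Open Scope ring_scope.

(* Lower bound: let [S] be an EDF [(s,k)]-schedule in which [i] completes at [c],
   and [r_s <= r_l <= r_i].  A job [j < i] released in [[r_l, c)] has a smaller
   deadline than [i], so by the EDF property it cannot still be unfinished at the
   last slot [c - 1] of [i]; hence all jobs [j <= i] released in [[r_l, c)] are
   processed inside that window and [r_l + load_i(r_l, c) <= c].
   Upper bound: walk back from the completion of [i] in [G_{s,k}] along the
   maximal run of slots executing jobs of index (equivalently deadline) at most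
   [i].  Jobs [j <= i] released before the run are finished when it starts, so the
   job [l] executed at its first slot is released exactly there, and the run is
   filled with jobs [j <= i] released in it.  Since [i] is unfinished until the
   end, every [b > r_i] with [r_l + load_i(r_l, b) <= b] is at least [C_i(G)].
   Applied with [b = d_j] and a feasible schedule, the same bound shows that [G]
   meets all deadlines, so [G] is itself an EDF [(s,k)]-schedule. *)

Section CountSome.
Variables (U : Type) (T : eqType) (f : U -> option T) (X : seq T).
Hypothesis uniqX : uniq X.

Lemma sum_eq_Some (o : option T) :
  (\sum_(j <- X) (o == Some j) = if o is Some j0 then j0 \in X else false)%N.
Proof.
case: o => [j0|]; last by rewrite big1.
rewrite -(count_uniq_mem j0 uniqX) -sum1_count [RHS]big_mkcond.
by apply: eq_bigr => j _; rewrite inE eq_sym.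
Qed.

Lemma sum_count_Some (us : seq U) :
  (\sum_(j <- X) count (fun u => f u == Some j) us
   = count (fun u => if f u is Some j then j \in X else false) us)%N.
Proof.
elim: us => [|u us IH] /=; first by rewrite big1.
by rewrite big_split /= sum_eq_Some IH; case: (f u).
Qed.

End CountSome.

Lemma ltn_sum_seq (T : eqType) (r : seq T) (F G : T -> nat) (i0 : T) :
  i0 \in r -> (forall i, i \in r -> F i <= G i)%N -> (F i0 < G i0)%N ->
  (\sum_(i <- r) F i < \sum_(i <- r) G i)%N.
Proof.
move=> ri0 leFG ltFG.
rewrite (big_rem i0 ri0) [X in (_ < X)%N](big_rem i0 ri0) /= -addSn leq_add //.
by rewrite !big_seq; apply: leq_sum => i /mem_rem; exact: leFG.
Qed.

Section SlotCounting.
Variables (S : sched) (j : nat).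

Definition slots_from (a : int) (n : nat) : nat :=
  count (fun u : nat => S (a + u%:Z) == Some j) (iota 0 n).

Lemma count_slotsE (a b : int) :
  a <= b -> count_slots S j a b = slots_from a (absz (b - a)).
Proof. by move=> ab; rewrite /count_slots ab. Qed.

Lemma slots_fromD a n m :
  slots_from a (n + m) = (slots_from a n + slots_from (a + n%:Z) m)%N.
Proof.
rewrite /slots_from iotaD count_cat add0n; congr (_ + _)%N.
rewrite -[n in iota n]addn0 iotaDl count_map; apply: eq_count => u /=.
by rewrite PoszD addrA.
Qed.

Lemma slots_from0 a n :
  (forall u, (u < n)%N -> S (a + u%:Z) != Some j) -> slots_from a n = 0%N.
Proof.
move=> free; apply/eqP; rewrite eqn0Ngt -has_count; apply/hasPn => u.
by rewrite mem_iota => /andP [_ /free].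
Qed.

Lemma count_slots_widen (a a' b' b : int) : a <= a' -> a' <= b' -> b' <= b ->
  (forall t, S t = Some j -> a <= t < b -> a' <= t < b') ->
  count_slots S j a b = count_slots S j a' b'.
Proof.
move=> aa' a'b' b'b inner.
rewrite !count_slotsE //; last exact: le_trans aa' (le_trans a'b' b'b).
have -> : absz (b - a) = (absz (a' - a) + absz (b' - a') + absz (b - b'))%N by lia.
have ea' : a + (absz (a' - a))%:Z = a' by lia.
have eb' : a + (absz (a' - a) + absz (b' - a'))%N%:Z = b' by lia.
rewrite !slots_fromD ea' eb' (@slots_from0 a) ?(@slots_from0 b') ?add0n ?addn0 //.
  by move=> u lt; apply/eqP => /inner; lia.
by move=> u lt; apply/eqP => /inner; lia.
Qed.

Lemma count_slots_eq (a b a' b' : int) : a <= b -> a' <= b' ->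
  (forall t, S t = Some j -> (a <= t < b) && (a' <= t < b')) ->
  count_slots S j a b = count_slots S j a' b'.
Proof.
move=> ab a'b' inside.
rewrite -(@count_slots_widen (Order.min a a') a b (Order.max b b')) ?ge_min ?le_max ?lexx //;
  last by move=> t /inside /andP [].
rewrite -(@count_slots_widen (Order.min a a') a' b' (Order.max b b'))
  ?ge_min ?le_max ?lexx ?orbT //.
by move=> t /inside /andP [].
Qed.

End SlotCounting.

Lemma sum_slots_from_le (S : sched) (X : seq nat) a n :
  uniq X -> (\sum_(j <- X) slots_from S j a n <= n)%N.
Proof.
move=> uX; rewrite (sum_count_Some (fun u : nat => S (a + u%:Z))) //.
by rewrite -[leqRHS](size_iota 0) count_size.
Qed.

Definition released_jobs (I : instance) (i : nat) (a b : int) : seq nat :=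
  [seq j <- iota 1 i | (a <= rtime I j) && (rtime I j < b)].

Lemma released_jobs_uniq I i a b : uniq (released_jobs I i a b).
Proof. by rewrite filter_uniq // iota_uniq. Qed.

Lemma mem_released_jobs I i a b j :
  (j \in released_jobs I i a b) = [&& (1 <= j <= i)%N, a <= rtime I j & rtime I j < b].
Proof.
rewrite mem_filter mem_iota andbC.
by case: (a <= rtime I j); case: (rtime I j < b); rewrite ?andbF //=; lia.
Qed.

Lemma loadE I i a b : load I i a b = Posz (\sum_(j <- released_jobs I i a b) ptime I j).
Proof. by rewrite /load big_filter /index_iota subn1. Qed.

Lemma window_load_le I S i (a b : int) : is_schedule I S -> a <= b ->
  (forall j, (1 <= j <= i)%N -> a <= rtime I j -> rtime I j < b ->
     scheduled S j /\ forall t, S t = Some j -> t < b) ->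
  a + load I i a b <= b.
Proof.
move=> [in_window gets_p] ab finished; rewrite loadE.
suff -> : (\sum_(j <- released_jobs I i a b) ptime I j =
           \sum_(j <- released_jobs I i a b) slots_from S j a (absz (b - a)))%N.
  by have := sum_slots_from_le S a (absz (b - a)) (released_jobs_uniq I i a b); lia.
apply: eq_big_seq => j; rewrite mem_released_jobs => /and3P [ji aj jb].
have [sched_j before_b] := finished j ji aj jb.
rewrite -(gets_p j sched_j) -count_slotsE //.
have [t0 /in_window [_ /andP [rt0 t0d]]] := sched_j.
apply: count_slots_eq => [|//|t St]; first exact: le_trans rt0 (ltW t0d).
have [_ /andP [rt td]] := in_window t j St.
by rewrite rt td (le_trans aj rt) before_b.
Qed.

Lemma is_job_le I k j : (k <= njobs I)%N -> (1 <= j <= k)%N -> is_job I j.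
Proof. by move=> kn /andP [j1 jk]; rewrite /is_job j1 (leq_trans jk kn). Qed.

Lemma dtime_ltE I j j' : valid_instance I -> is_job I j -> is_job I j' ->
  (dtime I j < dtime I j') = (j < j')%N.
Proof.
move=> [_ [increasing _]] hj hj'.
case: (ltngtP j j') => [lt|gt|->]; [exact: increasing | | exact: ltxx].
by apply/negbTE; rewrite -leNgt ltW // increasing.
Qed.

Lemma dtime_leE I j j' : valid_instance I -> is_job I j -> is_job I j' ->
  (dtime I j <= dtime I j') = (j <= j')%N.
Proof. by move=> V hj hj'; rewrite leNgt leqNgt dtime_ltE. Qed.

Lemma edf_completion_bound I s k i l S (c : int) :
  valid_instance I -> (k <= njobs I)%N -> (1 <= i <= k)%N ->
  sk_schedule I s k S -> edf I S -> is_completion S i c ->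
  (1 <= l <= i)%N -> rtime I s <= rtime I l -> rtime I l <= rtime I i ->
  bound_ok I i l c.
Proof.
move=> V kn /andP [i1 ik] [Ssched [cm [Scm [_ members]]]] Sedf [Slast Sbefore].
move=> /andP [l1 li] sl lri.
have [hi /andP [ri _]] := Ssched.1 _ _ Slast.
have c_cm : c <= cm.
  case: Scm => [[idle _] | [_ [_ before_cm]]]; first by rewrite idle in Slast.
  by have := before_cm _ _ Slast; lia.
split; first lia.
apply: (window_load_le Ssched) => [|j /andP [j1 ji] lj jc]; first lia.
have hj : is_job I j by apply: (is_job_le kn); rewrite j1 (leq_trans ji ik).
have sj : scheduled S j.
  apply/members; split; first by rewrite j1 (leq_trans ji ik).
  by split; [exact: le_trans lj | exact: lt_le_trans c_cm].
split => // t St; case: (eqVneq j i) => [ej | ne]; first by rewrite ej in St; exact: Sbefore.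
rewrite ltNge; apply/negP => ct.
have dij : dtime I i <= dtime I j.
  apply: (Sedf (c - 1) i j Slast sj); first lia.
  by move=> c' [_ /(_ t St)]; lia.
have : dtime I j < dtime I i by rewrite dtime_ltE // ltn_neqAle ne ji.
by rewrite ltNge dij.
Qed.

Section ArgMin.
Variables (T : eqType) (d : Order.disp_t) (R : orderType d).
Variables (el : pred T) (key : T -> R).

Definition argmin_step (best : option T) (j : T) : option T :=
  if el j then
    match best with
    | None => Some j
    | Some b => if (key j < key b)%O then Some j else best
    end
  else best.

Lemma argmin_spec (l : seq T) :
  if foldl argmin_step None l is Some j
  then [/\ j \in l, el j & forall j', j' \in l -> el j' -> (key j <= key j')%O]
  else forall j, j \in l -> ~~ el j.
Proof.
elim/last_ind: l => [|l x IH]; first by move=> j; rewrite in_nil.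
rewrite foldl_rcons; case: (foldl argmin_step None l) IH => [b [bl eb bmin] | none].
  rewrite /argmin_step; case ex: (el x) => /=; last first.
    split; rewrite ?mem_rcons ?in_cons ?bl ?orbT // => j'.
    by rewrite mem_rcons in_cons => /orP [/eqP -> | /bmin //]; rewrite ex.
  case: ltP => [xb | bx] /=; split; rewrite ?mem_rcons ?in_cons ?eqxx ?bl ?orbT // => j'.
    rewrite mem_rcons in_cons => /orP [/eqP -> _ | /bmin jmin /jmin]; first exact: lexx.
    exact: le_trans (ltW xb).
  by rewrite mem_rcons in_cons => /orP [/eqP -> | /bmin].
rewrite /argmin_step; case ex: (el x) => /=.
  split; rewrite ?mem_rcons ?in_cons ?eqxx // => j'.
  by rewrite mem_rcons in_cons => /orP [/eqP -> _ | /none /negbTE ->]; first exact: lexx.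
by move=> j; rewrite mem_rcons in_cons => /orP [/eqP -> | /none]; rewrite ?ex.
Qed.

End ArgMin.

Lemma extend_run_left (P : pred nat) (n c : nat) :
  (forall v, (n <= v < c)%N -> P v) ->
  exists u, [/\ (u <= n)%N, forall v, (u <= v < c)%N -> P v & (0 < u)%N -> ~~ P u.-1].
Proof.
elim: n => [|n IH] Pnc; first by exists 0%N.
have [Pn | nPn] := boolP (P n); last by exists n.+1.
have [|u [un Puc edge]] := IH.
  move=> v /andP [nv vc]; have [-> // | vn] := eqVneq v n.
  by apply: Pnc; rewrite vc andbT ltn_neqAle eq_sym vn nv.
by exists u; split => //; exact: leqW.
Qed.

Section Greedy.
Variables (I : instance) (s k : nat).

Lemma g_pickP R u :
  if g_pick I s k R u is Some j
  then g_eligible I s k R u j /\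
       forall j', g_eligible I s k R u j' -> dtime I j <= dtime I j'
  else forall j, ~~ g_eligible I s k R u j.
Proof.
have in_range j : g_eligible I s k R u j -> j \in iota 1 k.
  by case/and4P => /andP [j1 jk] _ _ _; rewrite mem_iota; lia.
have := argmin_spec (g_eligible I s k R u) (dtime I) (iota 1 k).
rewrite -[foldl _ _ _]/(g_pick I s k R u).
case: g_pick => [j [_ ej jmin] | none]; first by split => // j' /[dup] /in_range; exact: jmin.
by move=> j; apply/negP => /[dup] /in_range /none /negP.
Qed.

(* [gpick u] is the job run in slot [r_s + u] (greedy_shift), and [served j u]
   the number of slots [j] received in [[r_s, r_s + u)]. *)
Definition gpick (u : nat) : option nat := g_pick I s k (g_rem I s k u) u.

Definition served (j u : nat) : nat := count (fun v => gpick v == Some j) (iota 0 u).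

Definition pending (j u : nat) : bool :=
  [&& (1 <= j <= k)%N, rtime I s <= rtime I j, rtime I j <= rtime I s + u%:Z
    & (served j u < ptime I j)%N].

Definition candidates : seq nat := [seq j <- iota 1 k | rtime I s <= rtime I j].

Definition release_offset (j : nat) : nat := absz (rtime I j - rtime I s).

Lemma release_offsetE j :
  rtime I s <= rtime I j -> rtime I j = rtime I s + (release_offset j)%:Z.
Proof. by rewrite /release_offset; lia. Qed.

Lemma servedD j u n :
  served j (u + n) = (served j u + count (fun v => gpick (u + v) == Some j) (iota 0 n))%N.
Proof.
rewrite /served iotaD count_cat add0n; congr (_ + _)%N.
by rewrite -[u in iota u]addn0 iotaDl count_map.
Qed.

Lemma servedS j u : served j u.+1 = (served j u + (gpick u == Some j))%N.
Proof. by rewrite -addn1 servedD /= !addn0. Qed.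

Lemma served_mono j u v : (u <= v)%N -> (served j u <= served j v)%N.
Proof. by move=> uv; rewrite -(subnKC uv) servedD leq_addr. Qed.

Lemma g_remE u j :
  g_rem I s k u j = (ptime I j - served j u)%N /\ (served j u <= ptime I j)%N.
Proof.
elim: u j => [|u IH] j; first by rewrite /served /= subn0.
have [remE _] := IH j.
rewrite servedS /= -/(gpick u) remE.
case: eqP => [pick_j | _]; last by rewrite addn0; split => //; exact: (IH j).2.
have := g_pickP (g_rem I s k u) u; rewrite -/(gpick u) pick_j /= => -[+ _].
by rewrite /g_eligible remE => /and4P [_ _ _ pos]; split; lia.
Qed.

Lemma served_le j u : (served j u <= ptime I j)%N.
Proof. exact: (g_remE u j).2. Qed.

Lemma g_eligibleE u j : g_eligible I s k (g_rem I s k u) u j = pending j u.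
Proof. by rewrite /g_eligible /pending (g_remE u j).1 subn_gt0. Qed.

Lemma gpick_some u j : gpick u = Some j ->
  pending j u /\ forall j', pending j' u -> dtime I j <= dtime I j'.
Proof.
move=> pick_j; have := g_pickP (g_rem I s k u) u.
rewrite -/(gpick u) pick_j /= g_eligibleE => -[pj jmin]; split => // j'.
by rewrite -g_eligibleE; exact: jmin.
Qed.

Lemma gpick_none u : gpick u = None -> forall j, ~~ pending j u.
Proof.
move=> pick_none j; have := g_pickP (g_rem I s k u) u.
by rewrite -/(gpick u) pick_none -g_eligibleE; apply.
Qed.

Lemma mem_candidates j :
  (j \in candidates) = (1 <= j <= k)%N && (rtime I s <= rtime I j).
Proof. by rewrite mem_filter mem_iota andbC; congr (_ && _); lia. Qed.

Lemma candidates_uniq : uniq candidates.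
Proof. by rewrite filter_uniq // iota_uniq. Qed.

Lemma candidateP j : j \in candidates ->
  [/\ (1 <= j)%N, (j <= k)%N & rtime I s <= rtime I j].
Proof. by rewrite mem_candidates => /andP [/andP [-> ->] ->]. Qed.

Lemma pending_candidate j u : pending j u -> j \in candidates.
Proof. by case/and4P => jk sj _ _; rewrite mem_candidates jk sj. Qed.

Lemma greedy_shift (u : nat) : greedy I s k (rtime I s + u%:Z) = gpick u.
Proof.
rewrite /greedy ifT; last lia.
by have -> : absz (rtime I s + u%:Z - rtime I s)%R = u by lia.
Qed.

Lemma greedy_someP t j : greedy I s k t = Some j ->
  exists2 u : nat, t = rtime I s + u%:Z & gpick u = Some j.
Proof.
rewrite /greedy; case: ifP => // st pick.
by exists (absz (t - rtime I s)); first lia.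
Qed.

(* Each slot of the window gives one unit of service to a job of [X], at most
   [p_j] to each and less to the unfinished [j0]. *)
Lemma busy_window_lt (X : seq nat) (j0 u0 u1 : nat) : uniq X -> (u0 <= u1)%N ->
  (forall v, (u0 <= v < u1)%N -> exists2 j, j \in X & gpick v = Some j) ->
  j0 \in X -> (served j0 u1 < ptime I j0)%N ->
  (u1 - u0 < \sum_(j <- X) ptime I j)%N.
Proof.
move=> uX u01 busy j0X unfinished.
pose w j := count (fun v => gpick (u0 + v) == Some j) (iota 0 (u1 - u0)).
have served_u1 j : served j u1 = (served j u0 + w j)%N by rewrite -servedD subnKC.
have <- : (\sum_(j <- X) w j = u1 - u0)%N.
  rewrite (sum_count_Some (fun v => gpick (u0 + v))) //.
  apply/eqP; rewrite -[X in _ == X](size_iota 0) -all_count; apply/allP => v.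
  rewrite mem_iota => /andP [_ v_lt]; have [|j jX ->] := busy (u0 + v)%N => //; lia.
apply: (ltn_sum_seq j0X) => [j _|]; last by move: unfinished; rewrite served_u1; lia.
by have := served_le j u1; rewrite served_u1; lia.
Qed.

(* After every candidate is released, an unfinished candidate keeps the greedy
   busy, which cannot last longer than the total processing time. *)
Lemma greedy_finishes : exists U, forall j, j \in candidates -> served j U = ptime I j.
Proof.
pose M := (\max_(j <- candidates) release_offset j)%N.
exists (M + \sum_(j <- candidates) ptime I j)%N => j0 j0C.
apply/eqP; rewrite eqn_leq served_le leqNgt; apply/negP => unfinished.
have [j01 j0k sj0] := candidateP j0C.
have offset_j0 : (release_offset j0 <= M)%N by exact: leq_bigmax_seq.
have busy v : (M <= v < M + \sum_(j <- candidates) ptime I j)%N ->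
    exists2 j, j \in candidates & gpick v = Some j.
  case/andP => Mv v_end; case pick_v: (gpick v) => [j|].
    by exists j => //; exact: pending_candidate (gpick_some pick_v).1.
  have := gpick_none pick_v j0; rewrite /pending j01 j0k sj0 /=.
  have := served_mono j0 (ltnW v_end); have := release_offsetE sj0; lia.
have := busy_window_lt candidates_uniq (leq_addr _ M) busy j0C unfinished.
by rewrite addKn ltnn.
Qed.

(* [C_j(G_{s,k}) = r_s + c] (greedy_completion). *)
Definition completes_at (j c : nat) : Prop :=
  served j c = ptime I j /\ forall u, (u < c)%N -> (served j u < ptime I j)%N.

Lemma completes_at_exists j : j \in candidates -> exists c, completes_at j c.
Proof.
move=> jC; have [U doneU] := greedy_finishes.
have ex : exists u, served j u == ptime I j by exists U; rewrite doneU.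
case: (ex_minnP ex) => c /eqP served_c minimal; exists c; split => // u uc.
rewrite ltn_neqAle served_le andbT.
by apply/negP => /minimal; rewrite leqNgt uc.
Qed.

Lemma completes_at_last j c : (0 < ptime I j)%N -> completes_at j c ->
  (0 < c)%N /\ gpick c.-1 = Some j.
Proof.
move=> pj [served_c before]; case: c served_c before => [p0 | c served_c before].
  by rewrite -p0 in pj.
split => //=; apply/eqP; have := before c (ltnSn c).
by rewrite -served_c servedS; case: (gpick c == Some j) => //; rewrite addn0 ltnn.
Qed.

Lemma completes_at_after j c u : completes_at j c -> gpick u = Some j -> (u < c)%N.
Proof.
move=> [served_c _] /gpick_some [/and4P [_ _ _ unfinished] _].
by rewrite ltnNge; apply/negP => cu; have := served_mono j cu; lia.
Qed.

Lemma greedy_makespan j0 : j0 \in candidates -> (0 < ptime I j0)%N ->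
  exists C : nat, [/\ (0 < C)%N, exists j, gpick C.-1 = Some j
                    & forall u, (C <= u)%N -> gpick u = None].
Proof.
move=> j0C pj0; have [U doneU] := greedy_finishes.
have ex : exists u, all (fun j => served j u == ptime I j) candidates.
  by exists U; apply/allP => j /doneU ->.
case: (ex_minnP ex) => C /allP doneC minimal.
case: C doneC minimal => [/(_ j0 j0C) /eqP p0 _ | C doneC minimal].
  by rewrite -p0 in pj0.
exists C.+1; split => //.
  have : ~~ all (fun j => served j C == ptime I j) candidates.
    by apply/negP => /minimal; rewrite ltnn.
  case/allPn => j jC /eqP not_done; exists j => /=; apply/eqP.
  by move: (doneC j jC); rewrite servedS; case: (gpick C == Some j) => //; rewrite addn0 => /eqP.
move=> u Cu; case pick_u: (gpick u) => [j|] //.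
have [/[dup] /pending_candidate jC /and4P [_ _ _ unfinished] _] := gpick_some pick_u.
by have := served_mono j Cu; move: (doneC j jC) => /eqP; lia.
Qed.

Hypotheses (V : valid_instance I) (kn : (k <= njobs I)%N).

Lemma candidate_job j : j \in candidates -> is_job I j.
Proof. by case/candidateP => j1 jk _; apply: (is_job_le kn); rewrite j1 jk. Qed.

Lemma candidate_ptime_pos j : j \in candidates -> (0 < ptime I j)%N.
Proof. by move/candidate_job; exact: V.1. Qed.

Definition runs_at_most (j0 v : nat) : bool :=
  if gpick v is Some j then (j <= j0)%N else false.

Section BusyInterval.
Variables (j0 c0 : nat).
Hypotheses (j0C : j0 \in candidates) (j0_done : completes_at j0 c0).

Lemma runs_at_most_after_release v :
  (release_offset j0 <= v < c0)%N -> runs_at_most j0 v.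
Proof.
case/andP => rv vc; have [j01 j0k sj0] := candidateP j0C.
have pj0 : pending j0 v.
  rewrite /pending j01 j0k sj0 j0_done.2 //= andbT.
  by have := release_offsetE sj0; lia.
rewrite /runs_at_most; case pick_v: (gpick v) => [j|].
  have [/pending_candidate jC jmin] := gpick_some pick_v.
  by rewrite -(dtime_leE V) ?candidate_job // jmin.
by have := gpick_none pick_v j0; rewrite pj0.
Qed.

Variable u0 : nat.
Hypotheses (u0_run : forall v, (u0 <= v < c0)%N -> runs_at_most j0 v)
           (u0_edge : (0 < u0)%N -> ~~ runs_at_most j0 u0.-1).

(* A job of index at most [j0] still pending at slot [u0 - 1] would have been
   run there in preference to anything of larger deadline. *)
Lemma served_before_run j : (1 <= j <= j0)%N -> rtime I s <= rtime I j ->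
  (release_offset j < u0)%N -> served j u0 = ptime I j.
Proof.
move=> /andP [j1 jj0] sj ju0; have [_ j0k _] := candidateP j0C.
have hj : is_job I j by apply: (is_job_le kn); rewrite j1 (leq_trans jj0 j0k).
apply/eqP; rewrite eqn_leq served_le leqNgt; apply/negP => unfinished.
have u0_pos : (0 < u0)%N by lia.
have pj : pending j u0.-1.
  rewrite /pending j1 sj (leq_trans jj0 j0k) /=.
  have := served_mono j (leq_pred u0); have := release_offsetE sj; lia.
apply: (negP (u0_edge u0_pos)); rewrite /runs_at_most.
case pick: (gpick u0.-1) => [j'|]; last by have := gpick_none pick j; rewrite pj.
have [/pending_candidate j'C j'min] := gpick_some pick.
rewrite -(dtime_leE V) ?candidate_job //.
by apply: le_trans (j'min j pj) _; rewrite dtime_leE // candidate_job.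
Qed.

Lemma run_job_released v j : (u0 <= v < c0)%N -> gpick v = Some j ->
  [/\ (1 <= j <= j0)%N, rtime I s <= rtime I j,
      (u0 <= release_offset j)%N & (release_offset j <= v)%N].
Proof.
move=> /[dup] /u0_run + /andP [u0v vc0] pick.
rewrite /runs_at_most pick => jj0.
have [/and4P [/andP [j1 _] sj rj unfinished] _] := gpick_some pick.
have offset_v : (release_offset j <= v)%N by have := release_offsetE sj; lia.
split; rewrite ?j1 //; rewrite leqNgt; apply/negP => early.
have := served_before_run (j := j); rewrite j1 jj0 => /(_ erefl sj early).
by have := served_mono j u0v; lia.
Qed.

Lemma run_start_bound : (u0 <= release_offset j0)%N ->
  exists l, [/\ (1 <= l <= j0)%N, rtime I s <= rtime I l, rtime I l <= rtime I j0 &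
    forall b, rtime I j0 < b -> rtime I l + load I j0 (rtime I l) b <= b ->
      rtime I s + c0%:Z <= b].
Proof.
move=> u0_le; have [j01 _ sj0] := candidateP j0C.
have [c0_pos last] := completes_at_last (candidate_ptime_pos j0C) j0_done.
have [/and4P [_ _ rj0 _] _] := gpick_some last.
have rj0E := release_offsetE sj0.
have u0_in : (u0 <= u0 < c0)%N by rewrite leqnn /=; lia.
have := u0_run u0_in; rewrite /runs_at_most; case pick_u0: (gpick u0) => [l|] // _.
have [l1j0 sl u0l lu0] := run_job_released u0_in pick_u0.
have rlE : rtime I l = rtime I s + u0%:Z by have := release_offsetE sl; lia.
exists l; split => //; first lia.
move=> b rb fits; rewrite leNgt; apply/negP => b_early.
pose u1 := absz (b - rtime I s).
have u1E : b = rtime I s + u1%:Z by rewrite /u1; lia.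
have [u0u1 u1c0] : (u0 <= u1)%N /\ (u1 < c0)%N by lia.
have busy v : (u0 <= v < u1)%N ->
    exists2 j, j \in released_jobs I j0 (rtime I l) b & gpick v = Some j.
  case/andP => u0v vu1; have v_in : (u0 <= v < c0)%N by lia.
  have := u0_run v_in; rewrite /runs_at_most.
  case pick_v: (gpick v) => [j|] // _; exists j => //.
  have [/andP [j1 jj0] sj u0j jv] := run_job_released v_in pick_v.
  rewrite mem_released_jobs j1 jj0 /=; have := release_offsetE sj; lia.
have j0X : j0 \in released_jobs I j0 (rtime I l) b.
  by rewrite mem_released_jobs j01 leqnn /=; lia.
have := busy_window_lt (released_jobs_uniq I j0 (rtime I l) b) u0u1 busy j0X
  (j0_done.2 u1 u1c0).
by move: fits; rewrite loadE; lia.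
Qed.

End BusyInterval.

Lemma greedy_completion_bound j c : j \in candidates -> completes_at j c ->
  exists l, [/\ (1 <= l <= j)%N, rtime I s <= rtime I l, rtime I l <= rtime I j &
    forall b, rtime I j < b -> rtime I l + load I j (rtime I l) b <= b ->
      rtime I s + c%:Z <= b].
Proof.
move=> jC jc.
have [u0 [u0_le u0_run u0_edge]] := extend_run_left (runs_at_most_after_release jC jc).
exact (run_start_bound jC jc u0_run u0_edge u0_le).
Qed.

(* Take [b = d_j]: in a feasible schedule the jobs of index at most [j] released
   in [[r_l, d_j)] all run inside that window. *)
Lemma greedy_meets_deadline j c : j \in candidates -> completes_at j c ->
  rtime I s + c%:Z <= dtime I j.
Proof.
move=> jC jc; have [l [/andP [l1 lj] sl lrj bound]] := greedy_completion_bound jC jc.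
have [_ jk _] := candidateP jC.
have [Sf [[Sf_win Sf_count] Sf_all]] := V.2.2.2.
have [t0 /Sf_win [_ /andP [rt0 t0d]]] := Sf_all j (candidate_job jC).
have rd : rtime I j < dtime I j by exact: le_lt_trans rt0 t0d.
apply: bound => //; apply: (window_load_le (conj Sf_win Sf_count)).
  exact: le_trans lrj (ltW rd).
move=> j' /andP [j'1 j'j] _ _.
have hj' : is_job I j' by apply: (is_job_le kn); rewrite j'1 (leq_trans j'j jk).
split; first exact: Sf_all.
move=> t /Sf_win [_ /andP [_ td]]; apply: lt_le_trans td _.
by rewrite dtime_leE // candidate_job.
Qed.

Lemma greedy_slot t j : greedy I s k t = Some j ->
  [/\ j \in candidates, rtime I j <= t & t < dtime I j].
Proof.
case/greedy_someP => u -> pick_u.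
have [/[dup] /pending_candidate jC /and4P [_ _ rj _] _] := gpick_some pick_u.
have [c jc] := completes_at_exists jC.
have := completes_at_after jc pick_u; have := greedy_meets_deadline jC jc.
by move=> deadline before; split => //; lia.
Qed.

Lemma greedy_completion j c : j \in candidates -> completes_at j c ->
  is_completion (greedy I s k) j (rtime I s + c%:Z).
Proof.
move=> jC jc; have [c_pos last] := completes_at_last (candidate_ptime_pos jC) jc.
split; last by move=> t /greedy_someP [u -> /(completes_at_after jc)]; lia.
have -> : rtime I s + c%:Z - 1 = rtime I s + (c.-1)%:Z by lia.
by rewrite greedy_shift.
Qed.

Lemma greedy_count j : j \in candidates ->
  count_slots (greedy I s k) j (rtime I j) (dtime I j) = ptime I j.
Proof.
move=> jC; have [c jc] := completes_at_exists jC; have [served_c _] := jc.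
have [c_pos last] := completes_at_last (candidate_ptime_pos jC) jc.
have deadline := greedy_meets_deadline jC jc.
have [/and4P [_ _ rj _] _] := gpick_some last.
rewrite (@count_slots_eq _ j _ _ (rtime I s) (rtime I s + c%:Z)); first last.
- move=> t St; have [_ rt td] := greedy_slot St.
  have [u Et /(completes_at_after jc) uc] := greedy_someP St.
  by rewrite rt td Et /=; lia.
- lia.
- lia.
rewrite count_slotsE; last lia.
have -> : absz (rtime I s + c%:Z - rtime I s)%R = c by lia.
by rewrite -served_c; apply: eq_count => u /=; rewrite greedy_shift.
Qed.

Lemma greedy_schedule : is_schedule I (greedy I s k).
Proof.
split => [t j /greedy_slot [jC rj jd] | j [t /greedy_slot [jC _ _]]]; last exact: greedy_count.
by split; [exact: candidate_job | rewrite rj jd].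
Qed.

Lemma greedy_sk_schedule j0 : j0 \in candidates -> sk_schedule I s k (greedy I s k).
Proof.
move=> j0C; split; first exact: greedy_schedule.
have [C [C_pos [j pick_j] idle]] := greedy_makespan j0C (candidate_ptime_pos j0C).
have before_C t j' : greedy I s k t = Some j' -> t < rtime I s + C%:Z.
  case/greedy_someP => u -> pick_u; case: (ltnP u C) => [|Cu]; first lia.
  by rewrite idle in pick_u.
have last_C : greedy I s k (rtime I s + C%:Z - 1) = Some j.
  have -> : rtime I s + C%:Z - 1 = rtime I s + (C.-1)%:Z by lia.
  by rewrite greedy_shift.
exists (rtime I s + C%:Z); split; first by right; exists j.
split.
  have [jC _ jd] := greedy_slot last_C; have [j1 jk _] := candidateP jC.
  have hk : is_job I k by apply: (is_job_le kn); rewrite (leq_trans j1 jk) leqnn.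
  have : dtime I j <= dtime I k by rewrite dtime_leE //; exact: candidate_job.
  lia.
move=> j'; split.
  case=> t St; have [j'C rt _] := greedy_slot St; have [j'1 j'k sj'] := candidateP j'C.
  by rewrite j'1 j'k; split => //; split => //; exact: le_lt_trans rt (before_C _ _ St).
case=> /andP [j'1 j'k] [sj' _].
have j'C : j' \in candidates by rewrite mem_candidates j'1 j'k sj'.
have [c jc] := completes_at_exists j'C.
have [_ last] := completes_at_last (candidate_ptime_pos j'C) jc.
by exists (rtime I s + (c.-1)%:Z); rewrite greedy_shift.
Qed.

Lemma greedy_edf : edf I (greedy I s k).
Proof.
move=> t j l St [t' Sl] rl before_l.
have [lC _ _] := greedy_slot Sl; have [l1 lk sl] := candidateP lC.
have [u Et pick_u] := greedy_someP St.
have [_ jmin] := gpick_some pick_u.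
have [c lc] := completes_at_exists lC.
have lt_c := before_l _ (greedy_completion lC lc).
apply: jmin; rewrite /pending l1 lk sl /= lc.2 ?andbT; lia.
Qed.

End Greedy.

Theorem lemma1 (I : instance) (s k i : nat) :
  valid_instance I ->
  is_job I s -> (k <= njobs I)%N -> (1 <= i <= k)%N ->
  rtime I s <= rtime I i ->
  exists v : int,
    is_formula_value I s i v /\
    is_completion (greedy I s k) i v /\
    (exists S, [/\ sk_schedule I s k S, edf I S, scheduled S i
                 & is_completion S i v]) /\
    (forall S c, sk_schedule I s k S -> edf I S -> scheduled S i ->
       is_completion S i c -> v <= c).
Proof.
move=> V _ kn ik rsi.
have iC : i \in candidates I s k by rewrite mem_candidates ik rsi.
have [c ic] := completes_at_exists iC.
have Gsk := greedy_sk_schedule V kn iC.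
have Gedf := @greedy_edf I s k V kn.
have Gc := greedy_completion V kn iC ic.
have [l [li sl lri l_min]] := greedy_completion_bound V kn iC ic.
have min_l : is_min_bound I i l (rtime I s + c%:Z).
  split; first exact: edf_completion_bound V kn ik Gsk Gedf Gc li sl lri.
  by move=> b [ib bb]; exact: l_min.
exists (rtime I s + c%:Z); split; [split | split => //; split].
- by exists l.
- move=> l' b l'i sl' l'ri [_ minb]; apply: minb.
  exact: edf_completion_bound V kn ik Gsk Gedf Gc l'i sl' l'ri.
- exists (greedy I s k); split => //.
  by exists (rtime I s + c%:Z - 1); case: Gc.
- move=> S c' Ssk Sedf _ Sc; apply: min_l.2.
  exact: edf_completion_bound V kn ik Ssk Sedf Sc li sl lri.
Qed.
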